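(* For every prime $p\ge3$, the polynomials $P_{1,p}(z)=\sum_{n=0}^{p-1}\left(\binom{2n}{n}^2\bmod p\right)z^n$ and $P_{2,p}(z)=\sum_{n=0}^{p-1}\left(\frac{-1}{2n-1}\binom{2n}{n}^2\bmod p\right)z^n$ in $\mathbb{F}_p[z]$ are coprime.
   Context: The coefficients $\frac{-1}{2n-1}\binom{2n}{n}^2$ are integers, so their reduction mod $p$ makes sense. *)

From mathcomp Require Import all_boot all_order all_algebra.
Set Implicit Arguments. Unset Strict Implicit. Unset Printing Implicit Defensive.
Import GRing.Theory Num.Theory.
Local Open Scope ring_scope.

Definition c1 (n : nat) : int := ('C(n.*2, n) ^ 2)%N%:Z.

(* Integer coefficient -1/(2n-1) * binom(2n,n)^2 ; the division is exact
   (the paper notes these are integers), computed by intdiv's divz. *)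
Definition c2 (n : nat) : int :=
  ((- c1 n) %/ ((n.*2)%:Z - 1))%Z.

Definition P1 (p : nat) : {poly 'F_p} := \poly_(n < p) (c1 n)%:~R.
Definition P2 (p : nat) : {poly 'F_p} := \poly_(n < p) (c2 n)%:~R.

Definition c2_exact (n : nat) : Prop :=
  (((n.*2)%:Z - 1) %| c1 n)%Z.
Lemma c2_check : [seq c2 n | n <- iota 0 5] = [:: 1; -4; -12; -80; -700]%Z.
Proof. by vm_compute. Qed.

From mathcomp Require Import all_boot all_order all_algebra.
From mathcomp Require Import ring zify.
Set Implicit Arguments. Unset Strict Implicit. Unset Printing Implicit Defensive.
Import GRing.Theory.
Local Open Scope ring_scope.

(* Let y = P_{1,p}.  The coefficients u_n = binom(2n,n)^2 satisfy
   (n+1)^2 u_{n+1} = 4(2n+1)^2 u_n, i.e. y is a polynomial solution of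
        A y'' + B y' - 4 y = 0,   A = z(1-16z),  B = A' = 1-32z,
   and differentiating k times gives
        A y^(k+2) + (k+1) B y^(k+1) = 4(2k+1)^2 y^(k).               (E_k)
   Over any field where (deg y)! is invertible, a common factor g of y and
   (1-16z)(y + 2zy') is a constant:
   - a factor h of A coprime to B that divides y divides every y^(k)
     (induction on (E_k)), hence the nonzero constant y^(deg y); so g is
     coprime to z and to 1-16z, i.e. to A;
   - then g | 2Ay', so g | y', and (E_k) shows that g | y^(k) for all k. *)

Section PolynomialSolutions.

Variable F : fieldType.

Definition ode_lead : {poly F} := 'X * (1 - 'X *+ 16).
Definition ode_mid : {poly F} := 1 - 'X *+ 32.

(* The k-th derivative of the differential operator A D^2 + B D - 4. *)
Definition ode_der (y : {poly F}) (k : nat) : {poly F} :=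
  ode_lead * y^`(k.+2) + (ode_mid * y^`(k.+1)) *+ k.+1
  - y^`(k) *+ (4 * (2 * k + 1) ^ 2).

(* Differentiating E_k gives E_(k+1), since A'' = -32 and B' = -32. *)
Lemma deriv_ode_der (y : {poly F}) k : (ode_der y k)^`() = ode_der y k.+1.
Proof.
have d1 : (1 : {poly F})^`() = 0 by rewrite -polyC1 derivC.
rewrite /ode_der !derivnS; set z := y^`(k).
by rewrite !derivB !derivD !derivMn !derivM /ode_lead /ode_mid
  !derivB !derivMn derivX d1; ring.
Qed.

Lemma ode_derivatives (y : {poly F}) : ode_der y 0 = 0 ->
  forall k, ode_lead * y^`(k.+2) + (ode_mid * y^`(k.+1)) *+ k.+1
            = y^`(k) *+ (4 * (2 * k + 1) ^ 2).
Proof.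
move=> y_ode.
have all_k k : ode_der y k = 0.
  by elim: k => [//|k IHk]; rewrite -deriv_ode_der IHk deriv0.
by move=> k; apply/eqP; rewrite -subr_eq0 -[_ - _]/(ode_der y k) all_k.
Qed.

Lemma ode_of_coef_rec (y : {poly F}) :
  (forall n, y`_n.+1 *+ n.+1 ^ 2 = y`_n *+ (4 * (2 * n + 1) ^ 2)) ->
  ode_der y 0 = 0.
Proof.
move=> rec; have coef_ode n :
    (ode_der y 0)`_n = y`_n.+1 *+ n.+1 ^ 2 - y`_n *+ (4 * (2 * n + 1) ^ 2).
  have -> : ode_der y 0 = 'X * y^`(2) - ('X * ('X * y^`(2))) *+ 16 + y^`()
                          - ('X * y^`()) *+ 32 - y *+ 4.
    by rewrite /ode_der derivn1 derivn0 /ode_lead /ode_mid; ring.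
  rewrite !(coefD, coefN, coefMn, coefXM, coef_derivn, coef_deriv).
  by case: n => [|[|n]] /=; rewrite ?add2n ?ffactnS ?ffactn0 /=; ring.
by apply/polyP => n; rewrite coef_ode rec subrr coef0.
Qed.

Variable y : {poly F}.
Hypothesis y_ode : ode_der y 0 = 0.
Hypothesis y_neq0 : y != 0.
(* (deg y)! is invertible in F; this holds in characteristic 0, or in
   characteristic p as soon as deg y < p. *)
Hypothesis fact_deg_neq0 : ((size y).-1)`!%:R != 0 :> F.

Local Notation deg := (size y).-1.

(* Every k+1 <= deg y divides (deg y)!, so it is invertible too. *)
Lemma succ_lt_deg_neq0 k : (k < deg)%N -> k.+1%:R != 0 :> F.
Proof.
move=> lt_k_deg; have /dvdnP[m def_fact] : (k.+1 %| deg`!)%N by apply: dvdn_fact.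
by move: fact_deg_neq0; rewrite def_fact natrM mulf_eq0 negb_or => /andP[].
Qed.

(* The deg-th derivative of y is a nonzero constant, so its divisors are
   constants. *)
Lemma divides_top_derivative (h : {poly F}) : h %| y^`(deg) -> size h == 1%N.
Proof.
have top_der : y^`(deg) = (lead_coef y *+ deg`!)%:P.
  apply/polyP => i; rewrite coefC coef_derivn; case: i => [|i] /=.
    by rewrite addn0 ffactnn lead_coefE.
  by rewrite nth_default ?mul0rn //; case: (size y) => //= s; rewrite addnS ltnS leq_addr.
have c_neq0 : lead_coef y *+ deg`! != 0.
  by rewrite -mulr_natr mulf_neq0 // lead_coef_eq0.
rewrite top_der => h_dvd.
have h_neq0 : h != 0.
  by apply: contraNneq c_neq0 => h0; move: h_dvd; rewrite h0 dvd0p polyC_eq0.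
have := dvdp_leq _ h_dvd; rewrite polyC_eq0 size_polyC c_neq0 => /(_ isT) le_h1.
by rewrite eqn_leq le_h1 lt0n size_poly_eq0.
Qed.

(* A factor of z(1-16z) coprime to 1-32z and dividing y is a constant:
   by (E_k) it divides (k+1) B y^(k+1), hence y^(k+1), for all k < deg. *)
Lemma singular_factor_const (h : {poly F}) :
  h %| ode_lead -> coprimep h ode_mid -> h %| y -> size h == 1%N.
Proof.
move=> h_lead h_mid h_y; apply: divides_top_derivative.
suff h_der k : (k <= deg)%N -> h %| y^`(k) by apply: h_der.
elim: k => [|k IHk] le_k_deg; first by rewrite derivn0.
have h_yk := IHk (ltnW le_k_deg).
have : h %| (ode_mid * y^`(k.+1)) *+ k.+1.
  rewrite -(addKr (ode_lead * y^`(k.+2)) (_ *+ _)) ode_derivatives //.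
  by rewrite addrC; apply: dvdp_sub; [rewrite -mulr_natl dvdp_mull | rewrite dvdp_mulr].
by rewrite -scaler_nat dvdpZr ?succ_lt_deg_neq0 // Gauss_dvdpr.
Qed.

(* A divisor of y and y' coprime to z(1-16z) divides all y^(k), by (E_k). *)
Lemma regular_factor_const (g : {poly F}) :
  coprimep g ode_lead -> g %| y -> g %| y^`() -> size g == 1%N.
Proof.
move=> g_lead g_y g_y'; apply: divides_top_derivative.
suff g_der k : g %| y^`(k) /\ g %| y^`(k.+1) by case: (g_der deg).
elim: k => [|k [g_yk g_yk1]]; first by rewrite derivn0 derivn1.
split=> //; rewrite -(Gauss_dvdpr _ g_lead).
rewrite -(addrK ((ode_mid * y^`(k.+1)) *+ k.+1) (_ * _)) ode_derivatives //.
by apply: dvdp_sub; rewrite -mulr_natl dvdp_mull // dvdp_mull.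
Qed.

(* y and (1-16z)(y + 2zy') are coprime: the gcd is coprime to both factors
   z and 1-16z of A (each is coprime to B), and then divides y'. *)
Lemma coprimep_solution_companion : 2%:R != 0 :> F ->
  coprimep y ((1 - 'X *+ 16) * (y + ('X * y^`()) *+ 2)).
Proof.
move=> two_neq0; rewrite coprimep_def; set g := gcdp _ _.
have g_y : g %| y := dvdp_gcdl _ _.
have coprime_mid (q : {poly F}) : q %| ode_lead -> coprimep q ode_mid ->
    coprimep g q.
  move=> q_lead q_mid; rewrite coprimep_def; apply: singular_factor_const.
  - exact: dvdp_trans (dvdp_gcdr _ _) q_lead.
  - exact: coprimep_dvdr (dvdp_gcdr _ _) q_mid.
  - exact: dvdp_trans (dvdp_gcdl _ _) g_y.
have g_lead : coprimep g ode_lead.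
  rewrite /ode_lead coprimepMr; apply/andP; split; apply: coprime_mid.
  - exact: dvdp_mulr.
  - apply/Bezout_coprimepP; exists ((1 : {poly F}) *+ 32, 1) => /=.
    by rewrite /ode_mid (_ : _ + _ = 1) ?eqpxx //; ring.
  - exact: dvdp_mull.
  - apply/Bezout_coprimepP; exists ((1 : {poly F}) *+ 2, -1) => /=.
    by rewrite /ode_mid (_ : _ + _ = 1) ?eqpxx //; ring.
apply: regular_factor_const => //.
have : g %| (ode_lead * y^`()) *+ 2.
  rewrite (_ : _ *+ 2 = (1 - 'X *+ 16) * (y + ('X * y^`()) *+ 2)
                          - (1 - 'X *+ 16) * y); last by rewrite /ode_lead; ring.
  by apply: dvdp_sub; rewrite ?dvdp_gcdr ?dvdp_mull.
by rewrite -scaler_nat dvdpZr // Gauss_dvdpr.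
Qed.

End PolynomialSolutions.

Lemma central_binom_rec n :
  (n.+1 * 'C(n.+1.*2, n.+1) = 2 * (2 * n + 1) * 'C(n.*2, n))%N.
Proof.
have := mul_bin_diag n.*2.+2 n; have := mul_bin_down n.*2.+1 n.
by rewrite -[n.+1.*2]/(n.*2.+2) /=; nia.
Qed.

Lemma c1_rec n :
  (n.+1 ^ 2 * 'C(n.+1.*2, n.+1) ^ 2 = 4 * (2 * n + 1) ^ 2 * 'C(n.*2, n) ^ 2)%N.
Proof. by rewrite -expnMn central_binom_rec !expnMn. Qed.

(* 2n+1 divides binom(2n+2, n+1), being coprime to n+1; hence c2(n+1) is
   the exact quotient -c1(n+1)/(2n+1). *)
Lemma c2_exact_succ n : c2_exact n.+1.
Proof.
rewrite /c2_exact (_ : (n.+1).*2%:Z - 1 = (2 * n + 1)%N%:Z); last by lia.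
rewrite /c1 dvdzE /= expnS; apply: dvdn_mulr.
have coprime_n1 : coprime (2 * n + 1) n.+1.
  rewrite coprime_sym /coprime (_ : (2 * n + 1 = n.+1 + n)%N); last by lia.
  by rewrite gcdnDl; apply: coprimeSn.
by rewrite -(Gauss_dvdr _ coprime_n1) central_binom_rec dvdn_mulr ?dvdn_mull.
Qed.

Lemma c2_succ n :
  c2 n.+1 = c1 n.+1 * (2 * n + 3)%N%:Z - c1 n * (16 * (2 * n + 1))%N%:Z.
Proof.
have c2_mul : c2 n.+1 * ((n.+1).*2%:Z - 1) = - c1 n.+1.
  by rewrite /c2 divzK // rpredN; apply: c2_exact_succ.
have c1_mul : (n.+1 ^ 2)%N%:Z * c1 n.+1 = (4 * (2 * n + 1) ^ 2)%N%:Z * c1 n.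
  by rewrite /c1 -!PoszM c1_rec.
have den_neq0 : (n.+1).*2%:Z - 1 != 0 by rewrite subr_eq0; lia.
apply: (mulIf den_neq0); rewrite c2_mul.
move: c1_mul; rewrite -!natz -mul2n; set a := c1 n.+1; set b := c1 n => c1_mul.
rewrite (_ : (a * (2 * n + 3)%:R - b * (16 * (2 * n + 1))%:R) * ((2 * n.+1)%:R - 1)
   = a * (2 * n + 3)%:R * (2 * n + 1)%:R - 4%:R * ((4 * (2 * n + 1) ^ 2)%:R * b));
  last by ring.
by rewrite -c1_mul; ring.
Qed.

Section ReductionModP.

Variable p : nat.
Hypothesis p_prime : prime p.
Hypothesis p_gt2 : (2 < p)%N.

Lemma Fp_natr_neq0 n : ~~ (p %| n)%N -> n%:R != 0 :> 'F_p.
Proof. by rewrite (dvdn_pcharf (pchar_Fp p_prime)). Qed.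

Lemma ndvd_small n : (0 < n < p)%N -> ~~ (p %| n)%N.
Proof. by case/andP=> n_gt0 lt_np; apply/negP => /(dvdn_leq n_gt0); rewrite leqNgt lt_np. Qed.

Lemma Fp_small_neq0 n : (0 < n < p)%N -> n%:R != 0 :> 'F_p.
Proof. by move=> n_small; apply/Fp_natr_neq0/ndvd_small. Qed.

Lemma Fp_fact_neq0 d : (d < p)%N -> d`!%:R != 0 :> 'F_p.
Proof.
elim: d => [|d IHd] lt_dp; first by rewrite fact0 oner_neq0.
by rewrite factS natrM mulf_neq0 ?IHd ?(ltnW lt_dp) // Fp_small_neq0 ?lt_dp.
Qed.

Lemma Fp_two_neq0 : 2%:R != 0 :> 'F_p.
Proof. by apply: Fp_small_neq0; rewrite ltnW. Qed.

Definition binom_sq (i : nat) : 'F_p := ('C(i.*2, i) ^ 2)%N%:R.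

Lemma binom_sq_rec i :
  binom_sq i.+1 *+ i.+1 ^ 2 = binom_sq i *+ (4 * (2 * i + 1) ^ 2).
Proof. by rewrite /binom_sq -!mulrnA; congr (_ *+ _); rewrite mulnC c1_rec mulnC. Qed.

(* binom(2p-2, p-1) is divisible by p, read off from the recurrence at
   i = p-1, whose left-hand side carries the factor p^2. *)
Lemma binom_sq_last : binom_sq p.-1 = 0.
Proof.
have factor_neq0 : (4 * (2 * p.-1 + 1) ^ 2)%N%:R != 0 :> 'F_p.
  apply: Fp_natr_neq0; rewrite Euclid_dvdM // Euclid_dvdX // negb_or andbT.
  rewrite -[4%N]/(2 ^ 2)%N Euclid_dvdX // andbT ndvd_small ?p_gt2 //=.
  rewrite (_ : 2 * p.-1 + 1 = p + p.-1)%N; last by lia.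
  by rewrite dvdn_addr // ndvd_small //; lia.
have := binom_sq_rec p.-1; rewrite prednK ?(ltnW (ltnW p_gt2)) //.
rewrite -mulr_natr natrX pchar_Fp_0 // expr0n mulr0 -mulr_natr => /esym/eqP.
by rewrite mulf_eq0 (negbTE factor_neq0) orbF => /eqP.
Qed.

Lemma coef_P1 i : (P1 p)`_i = if (i < p)%N then binom_sq i else 0.
Proof. by rewrite coef_poly. Qed.

Lemma coef_P1_top i : (p <= i.+1)%N -> (P1 p)`_i = 0.
Proof.
move=> le_p_i1; rewrite coef_P1; case: ltnP => // lt_ip.
by rewrite (_ : i = p.-1) ?binom_sq_last //; lia.
Qed.

Lemma coef_P1_rec i :
  (P1 p)`_i.+1 *+ i.+1 ^ 2 = (P1 p)`_i *+ (4 * (2 * i + 1) ^ 2).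
Proof.
case: (ltnP i.+1 p) => lt_i1p; first by rewrite !coef_P1 lt_i1p ltnW ?binom_sq_rec.
by rewrite !coef_P1_top ?mul0rn // (leq_trans lt_i1p).
Qed.

(* P_{2,p} = (1-16z)(P_{1,p} + 2z P_{1,p}'), compared coefficientwise using
   c2_succ; the top coefficient uses binom_sq_last. *)
Lemma P2_companion :
  P2 p = (1 - 'X *+ 16) * (P1 p + ('X * (P1 p)^`()) *+ 2).
Proof.
set y := P1 p.
have coef_Xder i : ('X * y^`())`_i = y`_i *+ i.
  by rewrite coefXM; case: i => [|i]; rewrite ?mulr0n ?coef_deriv.
rewrite (_ : (1 - 'X *+ 16) * _ = (y + ('X * y^`()) *+ 2)
                                  - ('X * (y + ('X * y^`()) *+ 2)) *+ 16); last by ring.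
apply/polyP => [[|i]]; rewrite coefB coefMn coefXM !coefD ?coefMn !coef_Xder.
  by rewrite coef_poly coef_P1 (ltnW (ltnW p_gt2)) /= !(mulr0n, mul0rn, addr0, subr0).
rewrite /= coef_poly; case: (ltnP i.+1 p) => lt_i1p.
  rewrite c2_succ intrB !intrM -!pmulrn /y !coef_P1 lt_i1p (ltnW lt_i1p) /binom_sq.
  by ring.
rewrite /y !coef_P1_top ?(leq_trans lt_i1p) //.
by rewrite !(mul0rn, addr0, subr0).
Qed.

Lemma P1_neq0 : P1 p != 0.
Proof.
apply: contra_neq (@oner_neq0 'F_p) => P1_eq0.
by have := coef_P1 0; rewrite P1_eq0 coef0 (ltnW (ltnW p_gt2)) => ->.
Qed.

Lemma P1_deg_lt : ((size (P1 p)).-1 < p)%N.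
Proof.
have := size_poly p (fun n => (c1 n)%:~R : 'F_p); rewrite -/(P1 p).
by case: (size (P1 p)) => [|s] //= _; apply: ltnW (ltnW p_gt2).
Qed.

End ReductionModP.

Theorem mainTheorem16 (p : nat) : prime p -> (3 <= p)%N ->
  coprimep (P1 p) (P2 p).
Proof.
move=> p_prime p_gt2; rewrite P2_companion //.
apply: coprimep_solution_companion.
- exact/ode_of_coef_rec/coef_P1_rec.
- exact: P1_neq0.
- exact/Fp_fact_neq0/P1_deg_lt.
- exact: Fp_two_neq0.
Qed.
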